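(* Let $T$ be a c.n.u. contraction on $H$ and let $(H_+,H_-,\Gamma_+,\Gamma_-)$ be a boundary quadruple for $A_T^{\perp_s}$ with contractive Weyl function $B$. Then the localized kernel $\mathcal{K}$ satisfies: for $\lambda,\mu\in\mathbb{D}_+$: $\mathcal{K}(\lambda,\mu)=\dfrac{I-B(\lambda)B(\mu)^*}{1-\lambda\bar\mu}$; for $\lambda,\mu\in\mathbb{D}_-$: $\mathcal{K}(\lambda,\mu)=\dfrac{I-B(\bar\lambda)^*B(\bar\mu)}{1-\lambda\bar\mu}$; for $\lambda\in\mathbb{D}_+$, $\mu\in\mathbb{D}_-$: $\mathcal{K}(\lambda,\mu)=\dfrac{B(\lambda)-B(\bar\mu)}{\lambda-\bar\mu}$; for $\lambda\in\mathbb{D}_-$, $\mu\in\mathbb{D}_+$: $\mathcal{K}(\lambda,\mu)=\dfrac{B(\bar\lambda)^*-B(\mu)^*}{\lambda-\bar\mu}$; where in the last two cases, when $\lambda=\bar\mu$, the right-hand side is understood as its limit.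
   Context: $H$ is an infinite-dimensional separable complex Hilbert space with inner product $(\cdot,\cdot)_H$; $T\in\mathbb{B}(H)$, $\|T\|\le1$, is completely non-unitary. $\mathbb{K}=\ker(I-T^*T)$. $\mathbb{H}=H\oplus_\perp H$ with $[(x_1,x_2),(y_1,y_2)]=i(x_1,y_1)_H-i(x_2,y_2)_H$; $S^{\perp_s}=\{a:[a,b]=0\ \forall b\in S\}$; $A_T=\{(x,Tx):x\in\mathbb{K}\}$. $\mathbb{D}_\pm$ are two copies of the open unit disc; for $\lambda\in\mathbb{D}_\pm$, $\bar\lambda$ (conjugate coordinate) is regarded as a point of $\mathbb{D}_\mp$. $N_\lambda=\{(x,\lambda x)\}\cap A_T^{\perp_s}$ ($\lambda\in\mathbb{D}_+$), $N_\lambda=\{(\lambda x,x)\}\cap A_T^{\perp_s}$ ($\lambda\in\mathbb{D}_-$), $x$ ranging over $H$. A boundary quadruple: Hilbert spaces $H_\pm$ and linear $\Gamma_\pm:A_T^{\perp_s}\to H_\pm$ with $(\Gamma_+,\Gamma_-)$ bounded, onto $H_+\oplus_\perp H_-$, kernel $A_T$, and $[a,b]=i(\Gamma_+a,\Gamma_+b)-i(\Gamma_-a,\Gamma_-b)$. Then for $\lambda\in\mathbb{D}_+$, $\Gamma_+|_{N_\lambda}$ is a bijection onto $H_+$ and $\Gamma_-a=B(\lambda)\Gamma_+a$ ($a\in N_\lambda$) for a unique $B(\lambda)\in\mathbb{B}(H_+,H_-)$, $\|B(\lambda)\|<1$, holomorphic in $\lambda$; for $\lambda\in\mathbb{D}_-$,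 $\Gamma_-|_{N_\lambda}$ is a bijection onto $H_-$ and $\Gamma_+a=B(\bar\lambda)^*\Gamma_-a$. $\gamma_+(\lambda)x\in N_\lambda$ with $\Gamma_+\gamma_+(\lambda)x=x$ ($\lambda\in\mathbb{D}_+,x\in H_+$); $\gamma_-(\lambda)x\in N_\lambda$ with $\Gamma_-\gamma_-(\lambda)x=x$ ($\lambda\in\mathbb{D}_-,x\in H_-$). $\varphi_+=pr_1\circ\gamma_+$, $\varphi_-=pr_2\circ\gamma_-$ ($pr_i$: projection of $\mathbb{H}$ onto the $i$-th copy of $H$). Bundles: $E_\lambda=pr_1(N_\lambda)$ ($\lambda\in\mathbb{D}_+$), $E_\lambda=pr_2(N_\lambda)$ ($\lambda\in\mathbb{D}_-$); $F^\dagger_\lambda=E_{\bar\lambda}$; $F_\lambda$ = continuous conjugate-linear functionals on $F^\dagger_\lambda$, pairing $((\cdot,\cdot))$. For $x\in H$, $\hat x(\lambda)\in F_\lambda$ is $\omega\mapsto(x,\omega)_H$. Trivialization: for $\lambda\in\mathbb{D}_+$ define $\varphi_-^\dagger(\lambda):F_\lambda\to H_-$ by $(\varphi_-^\dagger(\lambda)\omega,y)_{H_-}=((\omega,\varphi_-(\bar\lambda)y))$ for all $y\in H_-$; for $\lambda\in\mathbb{D}_-$ define $\varphi_+^\dagger(\lambda):F_\lambda\to H_+$ by $(\varphi_+^\dagger(\lambda)\omega,y)_{H_+}=((\omega,\varphi_+(\bar\lambda)y))$. For a section $s$ of $F$, $f_s(\lambda)=\varphi_-^\dagger(\lambda)s(\lambda)\in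 H_-$ for $\lambda\in\mathbb{D}_+$ and $f_s(\lambda)=\varphi_+^\dagger(\lambda)s(\lambda)\in H_+$ for $\lambda\in\mathbb{D}_-$. The localized kernel: for $\mu\in\mathbb{D}_+$, $\mathcal{K}(\lambda,\mu)y:=f_{\hat z}(\lambda)$ with $z=\varphi_-(\bar\mu)y$, $y\in H_-$; for $\mu\in\mathbb{D}_-$, $\mathcal{K}(\lambda,\mu)y:=f_{\hat z}(\lambda)$ with $z=\varphi_+(\bar\mu)y$, $y\in H_+$. (This is the kernel $K(\lambda,\mu)=\iota_\lambda^\dagger\iota_\mu$ of the model space written in these trivializations.) *)

From mathcomp Require Import all_boot all_order all_algebra.
From mathcomp Require Import reals.
From mathcomp Require Export complex.
From Stdlib Require Import ClassicalEpsilon.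
Set Implicit Arguments. Unset Strict Implicit. Unset Printing Implicit Defensive.
Import GRing.Theory Num.Theory.
Local Open Scope ring_scope.

Definition is_cauchy (R : realType) (V : lmodType R[i]) (n2 : V -> R[i])
    (u : nat -> V) : Prop :=
  forall e : R[i], 0 < e -> exists N : nat, forall m n : nat,
    (N <= m)%N -> (N <= n)%N -> n2 (u m - u n) < e.

Definition converges_to (R : realType) (V : lmodType R[i]) (n2 : V -> R[i])
    (u : nat -> V) (l : V) : Prop :=
  forall e : R[i], 0 < e -> exists N : nat, forall n : nat,
    (N <= n)%N -> n2 (u n - l) < e.

Record hilbert (R : realType) := Hilbert {
  hsort :> lmodType R[i];
  hip : hsort -> hsort -> R[i];
  hip_linl : forall (a : R[i]) (x y z : hsort),
      hip (a *: x + y) z = a * hip x z + hip y z;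
  hip_sym : forall x y : hsort, hip y x = (hip x y)^*;
  hip_ge0 : forall x : hsort, 0 <= hip x x;
  hip_def : forall x : hsort, hip x x = 0 -> x = 0;
  hip_complete : forall u : nat -> hsort,
      is_cauchy (fun x => hip x x) u ->
      exists l, converges_to (fun x => hip x x) u l
}.
Arguments hip {R} h.

Definition hnorm (R : realType) (X : hilbert R) (x : X) : R[i] :=
  sqrtC (hip X x x).

Definition separable (R : realType) (X : hilbert R) : Prop :=
  exists d : nat -> X, forall (x : X) (e : R[i]), 0 < e ->
    exists n : nat, hnorm (x - d n) < e.

Definition infinite_dim (R : realType) (X : hilbert R) : Prop :=
  forall n : nat, exists v : 'I_n -> X,
    forall c : 'I_n -> R[i], \sum_(i < n) c i *: v i = 0 -> forall i, c i = 0.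

Definition is_linear (R : realType) (X Y : hilbert R) (f : X -> Y) : Prop :=
  forall (a : R[i]) (x y : X), f (a *: x + y) = a *: f x + f y.

Definition adjoint (R : realType) (X Y : hilbert R) (f : X -> Y) : Y -> X :=
  fun y => epsilon (inhabits (0 : X))
             (fun x => forall u : X, hip Y (f u) y = hip X u x).

Definition is_contraction (R : realType) (H : hilbert R) (T : H -> H) : Prop :=
  is_linear T /\ forall x : H, hnorm (T x) <= hnorm x.

Definition closed_subspace (R : realType) (H : hilbert R) (M : H -> Prop) : Prop :=
  M 0 /\ (forall (a : R[i]) x y, M x -> M y -> M (a *: x + y)) /\
  (forall (u : nat -> H) l, (forall n, M (u n)) ->
      converges_to (fun x => hip H x x) u l -> M l).

Definition cnu (R : realType) (H : hilbert R) (T : H -> H) : Prop :=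
  forall M : H -> Prop, closed_subspace M ->
    (forall x, M x -> M (T x)) -> (forall x, M x -> M (adjoint T x)) ->
    (forall x, M x -> adjoint T (T x) = x /\ T (adjoint T x) = x) ->
    forall x, M x -> x = 0.

Section Krein.
Variables (R : realType) (H : hilbert R) (T : H -> H).

Definition kform (a b : H * H) : R[i] :=
  'i * hip H a.1 b.1 - 'i * hip H a.2 b.2.

Definition KK (x : H) : Prop := x - adjoint T (T x) = 0.

Definition AT (a : H * H) : Prop := exists x, KK x /\ a = (x, T x).

Definition ATperp (a : H * H) : Prop := forall b, AT b -> kform a b = 0.

Definition Nplus (l : R[i]) (a : H * H) : Prop :=
  (exists x, a = (x, l *: x)) /\ ATperp a.
Definition Nminus (l : R[i]) (a : H * H) : Prop :=
  (exists x, a = (l *: x, x)) /\ ATperp a.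

End Krein.

(* The maps Gamma_+- are given as total functions on H x H; only their
   restriction to A_T^{perp_s} matters (all conditions refer to it). *)
Definition boundary_quadruple (R : realType) (H : hilbert R) (T : H -> H)
    (Hp Hm : hilbert R) (Gp : H * H -> Hp) (Gm : H * H -> Hm) : Prop :=
  (forall (c : R[i]) (a b : H * H), ATperp T a -> ATperp T b ->
      Gp (c *: a.1 + b.1, c *: a.2 + b.2) = c *: Gp a + Gp b /\
      Gm (c *: a.1 + b.1, c *: a.2 + b.2) = c *: Gm a + Gm b) /\
  (exists M : R[i], forall a, ATperp T a ->
      hip Hp (Gp a) (Gp a) + hip Hm (Gm a) (Gm a)
        <= M * (hip H a.1 a.1 + hip H a.2 a.2)) /\
  (forall (yp : Hp) (ym : Hm), exists a, ATperp T a /\ Gp a = yp /\ Gm a = ym) /\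
  (forall a, (ATperp T a /\ Gp a = 0 /\ Gm a = 0) <-> AT T a) /\
  (forall a b, ATperp T a -> ATperp T b ->
      kform a b = 'i * hip Hp (Gp a) (Gp b) - 'i * hip Hm (Gm a) (Gm b)).

Section Weyl.
Variables (R : realType) (H : hilbert R) (T : H -> H) (Hp Hm : hilbert R)
          (Gp : H * H -> Hp) (Gm : H * H -> Hm).

Definition gammap (l : R[i]) (y : Hp) : H * H :=
  epsilon (inhabits (0, 0)) (fun a => Nplus T l a /\ Gp a = y).
Definition gammam (l : R[i]) (y : Hm) : H * H :=
  epsilon (inhabits (0, 0)) (fun a => Nminus T l a /\ Gm a = y).

Definition Weyl (l : R[i]) (y : Hp) : Hm := Gm (gammap l y).

Definition phip (l : R[i]) (y : Hp) : H := (gammap l y).1.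
Definition phim (l : R[i]) (y : Hm) : H := (gammam l y).2.

(* trivialisations phi_-^dagger(l) (l in D_+) and phi_+^dagger(l)
   (l in D_-); an element of F_l is given as a functional s on H, of which
   only the restriction to E_{conj l} matters. *)
Definition phimdag (l : R[i]) (s : H -> R[i]) : Hm :=
  epsilon (inhabits (0 : Hm))
    (fun w => forall y : Hm, hip Hm w y = s (phim l^* y)).
Definition phipdag (l : R[i]) (s : H -> R[i]) : Hp :=
  epsilon (inhabits (0 : Hp))
    (fun w => forall y : Hp, hip Hp w y = s (phip l^* y)).

Definition hat (x : H) : H -> R[i] := fun w => hip H x w.

(* localized kernel K(l, m), split by the sheets of l and m:
   pp : l, m in D_+   (H_- -> H_-)
   mm : l, m in D_-   (H_+ -> H_+)
   pm : l in D_+, m in D_-   (H_+ -> H_-)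
   mp : l in D_-, m in D_+   (H_- -> H_+) *)
Definition Kpp (l m : R[i]) (y : Hm) : Hm := phimdag l (hat (phim m^* y)).
Definition Kmm (l m : R[i]) (y : Hp) : Hp := phipdag l (hat (phip m^* y)).
Definition Kpm (l m : R[i]) (y : Hp) : Hm := phimdag l (hat (phip m^* y)).
Definition Kmp (l m : R[i]) (y : Hm) : Hp := phipdag l (hat (phim m^* y)).

End Weyl.

(* Everything comes from the abstract Green identity
   [a, b] = i (Gamma_+ a, Gamma_+ b) - i (Gamma_- a, Gamma_- b).
   For a in N_l and b in N_m the left-hand side is a scalar multiple of an
   inner product of the H-components, e.g. -i (1 - l conj m) (a_2, b_2) when
   l, m lie in D_-, while the right-hand side is expressed through B and B^*;
   solving for that inner product identifies the functional defining K(l, m)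
   with the claimed operator.  That Gamma_+ maps N_l onto H_+ comes from the
   projection theorem: the vectors a_2 - l a_1, a in ker Gamma_+, form a closed
   subspace with trivial orthogonal complement.  On the diagonal l = conj m the
   difference quotients are represented by the pairings
   (phi_+(n) y, phi_-(conj l) y'), and phi_+ is Lipschitz in n, which yields
   the limit in operator norm. *)

From mathcomp Require Import all_boot all_order all_algebra.
From mathcomp Require Import reals complex.
From mathcomp Require Import ring lra.
From mathcomp Require Import classical_sets boolp.
From Stdlib Require Import ClassicalEpsilon.
Import Order.TTheory GRing.Theory Num.Theory ComplexField.
Set Implicit Arguments. Unset Strict Implicit. Unset Printing Implicit Defensive.
Local Open Scope ring_scope.

Section NumFacts.
Variable R : realType.
Local Notation C := R[i].
Implicit Types (z w : C) (r : R).

Lemma ge0_complexE z : 0 <= z -> z = ((complex.Re z)%:C)%C.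
Proof. by case: z => a b; rewrite lecE /= => /andP[/eqP -> _]. Qed.

Lemma Re_ge0 z : 0 <= z -> 0 <= complex.Re z.
Proof. by case: z => a b; rewrite lecE /= => /andP[_ ]. Qed.

Lemma Re_gt0 z : 0 < z -> 0 < complex.Re z.
Proof. by case: z => a b; rewrite ltcE /= => /andP[_ ]. Qed.

Lemma lec_Re z w : z <= w -> complex.Re z <= complex.Re w.
Proof. by rewrite lecE => /andP[]. Qed.

Lemma ReD z w : complex.Re (z + w) = complex.Re z + complex.Re w.
Proof. by case: z; case: w. Qed.

Lemma ReN z : complex.Re (- z) = - complex.Re z.
Proof. by case: z. Qed.

Lemma Re_conj z : complex.Re z^* = complex.Re z.
Proof. by case: z. Qed.

Lemma ReMr z r : complex.Re (z * (r%:C)%C) = complex.Re z * r.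
Proof. by case: z => x y /=; rewrite mulr0 subr0. Qed.

Lemma sqrtr_gt0_Re (e : C) : 0 < e -> 0 < Num.sqrt (complex.Re e).
Proof. by move=> e0; rewrite sqrtr_gt0 Re_gt0. Qed.

Lemma normc_ge0 z : 0 <= Normc.normc z.
Proof. by case: z => a b /=; rewrite sqrtr_ge0. Qed.

Lemma Re_le_normc z : complex.Re z <= Normc.normc z.
Proof.
case: z => a b /=.
have h : 0 <= a ^+ 2 + b ^+ 2 by rewrite addr_ge0 ?sqr_ge0.
have := sqr_sqrtr h; have := sqrtr_ge0 (a ^+ 2 + b ^+ 2).
set s := Num.sqrt _ => s0 hs; nra.
Qed.

Lemma normc_real r : Normc.normc ((r%:C)%C : C) = `|r|.
Proof. by rewrite /= expr0n addr0 sqrtr_sqr. Qed.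

Lemma normc_nat n : Normc.normc (n%:R : C) = n%:R.
Proof. by apply: (@complexI R); rewrite -[LHS]/`|n%:R : C| normr_nat rmorph_nat. Qed.

Lemma normc_conj z : Normc.normc z^* = Normc.normc z.
Proof. by case: z => x y /=; rewrite sqrrN. Qed.

Lemma normc_sqrE z : ((Normc.normc z ^+ 2)%:C)%C = z * z^*.
Proof. by rewrite -normCK rmorphXn. Qed.

Lemma sqrtC_real r : 0 <= r -> sqrtC ((r%:C)%C : C) = ((Num.sqrt r)%:C)%C.
Proof.
move=> r0; rewrite -{1}(sqr_sqrtr r0) rmorphXn sqrCK //.
by rewrite lecR sqrtr_ge0.
Qed.

Lemma normc_lt1 z : `|z| < 1 -> Normc.normc z < 1.
Proof. by move=> h; rewrite -(@ltcR R) rmorph1. Qed.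

Lemma normc_conj_lt1 z : Normc.normc z < 1 -> Normc.normc z^* < 1.
Proof. by rewrite normc_conj. Qed.

Lemma onem_mul_conj_neq0 (l m : C) : Normc.normc l < 1 -> Normc.normc m < 1 ->
  1 - l * m^* != 0.
Proof.
move=> hl hm; rewrite subr_eq0; apply/eqP => /(congr1 (@Normc.normc R)).
rewrite Normc.normcM normc_conj Normc.normc1.
have := normc_ge0 l; have := normc_ge0 m; nra.
Qed.

Lemma normc_near (l n : C) : Normc.normc (n - l) < (1 - Normc.normc l) / 2 ->
  Normc.normc n < (1 + Normc.normc l) / 2.
Proof. by move=> hn; have := le_normcD (n - l) l; rewrite addrNK; lra. Qed.

Lemma normc_near_lt1 (l n : C) : Normc.normc l < 1 ->
  Normc.normc (n - l) < (1 - Normc.normc l) / 2 -> Normc.normc n < 1.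
Proof. by move=> hl /normc_near; lra. Qed.

Lemma ler0_small r : (forall e, 0 < e -> r <= e) -> r <= 0.
Proof.
move=> h; rewrite leNgt; apply/negP => r0.
have := h (r / 2) (divr_gt0 r0 (ltr0Sn _ _)); lra.
Qed.

Lemma normc_small_eq0 z : (forall e : R, 0 < e -> Normc.normc z <= e) -> z = 0.
Proof.
move=> h; apply: Normc.eq0_normc; apply/eqP; rewrite eq_le normc_ge0 andbT.
exact: ler0_small.
Qed.

Lemma invSn_gt0 n : 0 < (n.+1%:R : R)^-1.
Proof. by rewrite invr_gt0 ltr0Sn. Qed.

Lemma invSn_small e : 0 < e ->
  exists N, forall n, (N <= n)%N -> (n.+1%:R : R)^-1 < e.
Proof.
move=> e0; have [k hk] := ltr_add_invr e0; exists k => n kn.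
rewrite add0r in hk; apply: le_lt_trans hk.
by rewrite lef_pV2 ?posrE ?ltr0Sn // ler_nat ltnS.
Qed.

End NumFacts.

Section HilbertSpace.
Variables (R : realType) (X : hilbert R).
Local Notation C := R[i].
Implicit Types (x y z w : X) (a : C).

Lemma hip0l z : hip X 0 z = 0.
Proof.
have := hip_linl 1 (0 : X) 0 z; rewrite scale1r addr0 mul1r => h.
by apply: (addrI (hip X 0 z)); rewrite addr0 -h.
Qed.

Lemma hipDl x y z : hip X (x + y) z = hip X x z + hip X y z.
Proof. by rewrite -{1}(scale1r x) hip_linl mul1r. Qed.

Lemma hipZl a x z : hip X (a *: x) z = a * hip X x z.
Proof. by rewrite -(addr0 (a *: x)) hip_linl hip0l addr0. Qed.

Lemma hipNl x z : hip X (- x) z = - hip X x z.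
Proof. by rewrite -scaleN1r hipZl mulN1r. Qed.

Lemma hipBl x y z : hip X (x - y) z = hip X x z - hip X y z.
Proof. by rewrite hipDl hipNl. Qed.

Lemma hip0r z : hip X z 0 = 0.
Proof. by rewrite hip_sym hip0l conjC0. Qed.

Lemma hipDr x y z : hip X z (x + y) = hip X z x + hip X z y.
Proof. by rewrite hip_sym hipDl rmorphD /= -!hip_sym. Qed.

Lemma hipZr a x z : hip X z (a *: x) = a^* * hip X z x.
Proof. by rewrite hip_sym hipZl rmorphM /= -hip_sym. Qed.

Lemma hipNr x z : hip X z (- x) = - hip X z x.
Proof. by rewrite hip_sym hipNl rmorphN /= -hip_sym. Qed.

Lemma hipBr x y z : hip X z (x - y) = hip X z x - hip X z y.
Proof. by rewrite hipDr hipNr. Qed.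

Lemma hip_injl w w' : (forall y, hip X w y = hip X w' y) -> w = w'.
Proof.
move=> h; apply/eqP; rewrite -subr_eq0; apply/eqP/hip_def.
by rewrite hipBl h subrr.
Qed.

Lemma hip_injr w w' : (forall y, hip X y w = hip X y w') -> w = w'.
Proof.
move=> h; apply/eqP; rewrite -subr_eq0; apply/eqP/hip_def.
by rewrite hipBr h subrr.
Qed.

Definition sqnorm x : R := complex.Re (hip X x x).

Definition rnorm x : R := Num.sqrt (sqnorm x).

Lemma hip_selfE x : hip X x x = ((sqnorm x)%:C)%C.
Proof. exact/ge0_complexE/hip_ge0. Qed.

Lemma sqnorm_ge0 x : 0 <= sqnorm x.
Proof. exact/Re_ge0/hip_ge0. Qed.

Lemma sqnorm0_eq0 x : sqnorm x = 0 -> x = 0.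
Proof. by move=> h; apply: hip_def; rewrite hip_selfE h. Qed.

Lemma conj_hip_self x : (hip X x x)^* = hip X x x.
Proof. by rewrite hip_selfE; exact: conjc_real. Qed.

Lemma rnorm_ge0 x : 0 <= rnorm x. Proof. exact: sqrtr_ge0. Qed.

Lemma sqnormE x : sqnorm x = rnorm x ^+ 2.
Proof. by rewrite sqr_sqrtr // sqnorm_ge0. Qed.

Lemma hnormE x : hnorm x = ((rnorm x)%:C)%C.
Proof. by rewrite /hnorm hip_selfE sqrtC_real // sqnorm_ge0. Qed.

Lemma rnorm0_eq0 x : rnorm x = 0 -> x = 0.
Proof. by move=> h; apply: sqnorm0_eq0; rewrite sqnormE h expr0n. Qed.

Lemma rnorm0 : rnorm 0 = 0.
Proof. by rewrite /rnorm /sqnorm hip0l /= sqrtr0. Qed.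

Lemma normc_hip_self x : Normc.normc (hip X x x) = rnorm x ^+ 2.
Proof. by rewrite hip_selfE normc_real ger0_norm ?sqnorm_ge0 // sqnormE. Qed.

Lemma CauchySchwarz x y : `|hip X x y| ^+ 2 <= hip X x x * hip X y y.
Proof.
have [->|y0] := eqVneq y 0; first by rewrite hip0r hip0l normr0 expr0n mulr0.
have b0 : 0 < hip X y y.
  by rewrite lt0r hip_ge0 andbT; apply/negP => /eqP/hip_def; exact/eqP.
have bn0 : hip X y y != 0 by rewrite gt_eqF.
set t := hip X x y / hip X y y.
have := hip_ge0 (x - t *: y).
rewrite hipBl !hipBr !hipZl !hipZr (hip_sym x y).
rewrite /t rmorphM /= fmorphV /= conj_hip_self normCK.
set a := hip X x y; set b := hip X y y; set c := hip X x x => h.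
rewrite -subr_ge0.
have -> : c * b - a * a^* =
    (c - a^* / b * a - (a / b * a^* - a / b * (a^* / b * b))) * b by field.
exact: mulr_ge0 h (ltW b0).
Qed.

Lemma normc_hip_le x y : Normc.normc (hip X x y) <= rnorm x * rnorm y.
Proof.
have hsq : Normc.normc (hip X x y) ^+ 2 <= sqnorm x * sqnorm y.
  by have := CauchySchwarz x y; rewrite !hip_selfE normCK -normc_sqrE -rmorphM lecR.
move: hsq; rewrite !sqnormE.
have := normc_ge0 (hip X x y); have := rnorm_ge0 x; have := rnorm_ge0 y.
set p := Normc.normc _; set u := rnorm x; set v := rnorm y => ? ? ? h.
have : 0 <= u * v by exact: mulr_ge0.
nra.
Qed.

Lemma sqnormD x y :
  sqnorm (x + y) = sqnorm x + sqnorm y + 2 * complex.Re (hip X x y).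
Proof. rewrite /sqnorm hipDl !hipDr (hip_sym x y) !ReD Re_conj; lra. Qed.

Lemma rnormD x y : rnorm (x + y) <= rnorm x + rnorm y.
Proof.
have h := sqnormD x y; rewrite !sqnormE in h.
have h2 := le_trans (Re_le_normc _) (normc_hip_le x y).
have := rnorm_ge0 x; have := rnorm_ge0 y; have := rnorm_ge0 (x + y).
set u := rnorm x in h h2 *; set v := rnorm y in h h2 *.
set w := rnorm (x + y) in h *.
move=> ? ? ?; nra.
Qed.

Lemma sqnormZ a x : sqnorm (a *: x) = Normc.normc a ^+ 2 * sqnorm x.
Proof.
apply: (@complexI R); rewrite -hip_selfE rmorphM /= normc_sqrE -hip_selfE.
by rewrite hipZl hipZr mulrA [a * _]mulrC.
Qed.

Lemma rnormZ a x : rnorm (a *: x) = Normc.normc a * rnorm x.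
Proof.
by rewrite /rnorm sqnormZ sqrtrM ?sqr_ge0 // sqrtr_sqr ger0_norm // normc_ge0.
Qed.

Lemma rnormN x : rnorm (- x) = rnorm x.
Proof.
rewrite -scaleN1r rnormZ (_ : Normc.normc (-1 : C) = 1) ?mul1r //.
by rewrite normcN Normc.normc1.
Qed.

Lemma rnormBC x y : rnorm (x - y) = rnorm (y - x).
Proof. by rewrite -rnormN opprB. Qed.

Lemma rnorm_distD x y z : rnorm (x - z) <= rnorm (x - y) + rnorm (y - z).
Proof. by rewrite (_ : x - z = (x - y) + (y - z)) ?rnormD // addrA addrNK. Qed.

Lemma rnorm_le_dual w (c : R) : 0 <= c ->
  (forall y, Normc.normc (hip X w y) <= c * rnorm y) -> rnorm w <= c.
Proof.
move=> c0 h; have := h w; rewrite normc_hip_self.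
have := rnorm_ge0 w; nra.
Qed.

Lemma sqnorm_sub_proj x w : w != 0 ->
  sqnorm (x - (hip X x w / hip X w w) *: w) =
  sqnorm x - Normc.normc (hip X x w) ^+ 2 / sqnorm w.
Proof.
move=> w0; have b0 : hip X w w != 0 by apply/negP => /eqP/hip_def; exact/eqP.
apply: (@complexI R).
rewrite -hip_selfE rmorphB rmorphM /= fmorphV /= normc_sqrE -!hip_selfE.
rewrite hipBl !hipBr !hipZl !hipZr (hip_sym x w) rmorphM /= fmorphV /=.
by rewrite conj_hip_self; field.
Qed.

Lemma parallelogram x y :
  sqnorm (x + y) + sqnorm (x - y) = 2 * sqnorm x + 2 * sqnorm y.
Proof.
rewrite !sqnormD hipNr ReN (_ : sqnorm (- y) = sqnorm y); first lra.
by rewrite !sqnormE rnormN.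
Qed.

Definition tends_to (u : nat -> X) (l : X) := forall e : R, 0 < e ->
  exists N, forall n, (N <= n)%N -> rnorm (u n - l) < e.

Definition cauchy_seq (u : nat -> X) := forall e : R, 0 < e ->
  exists N, forall m n, (N <= m)%N -> (N <= n)%N -> rnorm (u m - u n) < e.

Lemma rnorm_lt_sqr x (e : R) : 0 < e -> (rnorm x < e) = (sqnorm x < e ^+ 2).
Proof.
by move=> e0; rewrite sqnormE ltr_pXn2r // ?nnegrE ?rnorm_ge0 // ltW.
Qed.

Lemma hip_self_lt_sqr x (e : R) : 0 < e ->
  (hip X x x < ((e ^+ 2)%:C)%C) = (rnorm x < e).
Proof. by move=> e0; rewrite hip_selfE ltcR rnorm_lt_sqr. Qed.

Lemma hip_self_ltE x (e : C) : 0 < e ->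
  (hip X x x < e) = (rnorm x < Num.sqrt (complex.Re e)).
Proof.
move=> e0; have r0 := Re_gt0 e0.
rewrite rnorm_lt_sqr ?sqrtr_gt0 // sqr_sqrtr ?(ltW r0) //.
by rewrite {1}(ge0_complexE (ltW e0)) hip_selfE ltcR.
Qed.

Lemma converges_toE u l : converges_to (fun x => hip X x x) u l <-> tends_to u l.
Proof.
split=> h e e0.
  have e2 : 0 < ((e ^+ 2)%:C)%C :> C by rewrite ltcR exprn_gt0.
  by have [N hN] := h _ e2; exists N => n /hN; rewrite hip_self_lt_sqr.
have [N hN] := h _ (sqrtr_gt0_Re e0).
by exists N => n /hN; rewrite hip_self_ltE.
Qed.

Lemma is_cauchyE u : is_cauchy (fun x => hip X x x) u <-> cauchy_seq u.
Proof.
split=> h e e0.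
  have e2 : 0 < ((e ^+ 2)%:C)%C :> C by rewrite ltcR exprn_gt0.
  have [N hN] := h _ e2; exists N => m n hm hn.
  by have := hN _ _ hm hn; rewrite hip_self_lt_sqr.
have [N hN] := h _ (sqrtr_gt0_Re e0).
by exists N => m n hm hn; rewrite hip_self_ltE // hN.
Qed.

Lemma cauchy_seq_tends u : cauchy_seq u -> exists l, tends_to u l.
Proof. by move/is_cauchyE/hip_complete => [l /converges_toE]; exists l. Qed.

Lemma tends_to_unique u l l' : tends_to u l -> tends_to u l' -> l = l'.
Proof.
move=> h h'; apply/eqP; rewrite -subr_eq0; apply/eqP/rnorm0_eq0/eqP.
rewrite eq_le rnorm_ge0 andbT; apply: ler0_small => e e0.
have e2 : 0 < e / 2 by rewrite divr_gt0.
have [N hN] := h _ e2; have [N' hN'] := h' _ e2.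
have := hN (maxn N N') (leq_maxl _ _); have := hN' (maxn N N') (leq_maxr _ _).
have := rnorm_distD l (u (maxn N N')) l'; rewrite (rnormBC l (u _)); lra.
Qed.

Lemma tends_to_cauchy u l : tends_to u l -> cauchy_seq u.
Proof.
move=> h e e0; have e2 : 0 < e / 2 by rewrite divr_gt0.
have [N hN] := h _ e2; exists N => m n /hN hm /hN hn.
have := rnorm_distD (u m) l (u n); rewrite (rnormBC l); lra.
Qed.

Lemma tends_toZD (k : C) u v p q : tends_to u p -> tends_to v q ->
  tends_to (fun n => k *: u n + v n) (k *: p + q).
Proof.
move=> hu hv e e0.
have k0 : 0 < Normc.normc k + 1 by have := normc_ge0 k; lra.
have e2 : 0 < e / 2 / (Normc.normc k + 1) by rewrite !divr_gt0.
have e3 : 0 < e / 2 by rewrite divr_gt0.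
have [N hN] := hu _ e2; have [N' hN'] := hv _ e3.
exists (maxn N N') => n hn.
have h1 := hN n (leq_trans (leq_maxl _ _) hn).
have h2 := hN' n (leq_trans (leq_maxr _ _) hn).
have -> : k *: u n + v n - (k *: p + q) = k *: (u n - p) + (v n - q).
  by rewrite scalerBr opprD !addrA; congr (_ + _); rewrite addrAC.
apply: le_lt_trans (rnormD _ _) _; rewrite rnormZ.
have := rnorm_ge0 (u n - p); have := normc_ge0 k.
move: h1 h2; set a := Normc.normc k; set b := rnorm (u n - p).
set c := rnorm (v n - q) => h1 h2 ? ?.
have : b * (a + 1) < e / 2 by rewrite -ltr_pdivlMr.
nra.
Qed.

Lemma near_min_orth (Y : X -> Prop) v y0 (t : R) :
  (forall (k : C) x y, Y x -> Y y -> Y (k *: x + y)) -> Y y0 ->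
  (forall y, Y y -> sqnorm (v - y0) <= sqnorm (v - y) + t) ->
  forall w, Y w -> Normc.normc (hip X (v - y0) w) ^+ 2 <= t * sqnorm w.
Proof.
move=> Ylin Yy0 hmin w Yw.
have [->|w0] := eqVneq w 0.
  by rewrite hip0r Normc.normc0 expr0n /= sqnormE rnorm0 expr0n mulr0.
have nw0 : 0 < sqnorm w.
  by rewrite lt0r sqnorm_ge0 andbT; apply: contra w0 => /eqP/sqnorm0_eq0 ->.
have := hmin _ (Ylin (hip X (v - y0) w / hip X w w) _ _ Yw Yy0).
rewrite opprD addrA addrAC sqnorm_sub_proj // -ler_pdivrMr //.
set c := _ / sqnorm w; lra.
Qed.

Section Projection.
Variable Y : X -> Prop.
Hypotheses (Y0 : Y 0)
  (Ylin : forall (k : C) x y, Y x -> Y y -> Y (k *: x + y))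
  (Ycl : forall u l, (forall n, Y (u n)) -> tends_to u l -> Y l).
Variable v : X.

Let dist2 : set R := fun r => exists y, Y y /\ r = sqnorm (v - y).

Let dist2_has_inf : has_inf dist2.
Proof.
split; first by exists (sqnorm (v - 0)); exists 0.
by exists 0 => r [y [_ ->]]; exact: sqnorm_ge0.
Qed.

Let inf_le_dist2 y : Y y -> inf dist2 <= sqnorm (v - y).
Proof. by move=> Yy; apply: (ge_inf dist2_has_inf.2); exists y. Qed.

Let minimizing (ys : nat -> X) :=
  forall n, Y (ys n) /\ sqnorm (v - ys n) < inf dist2 + (n.+1%:R)^-1.

Let minimizing_exists : exists ys, minimizing ys.
Proof.
have adherent n : exists y, Y y /\ sqnorm (v - y) < inf dist2 + (n.+1%:R)^-1.
  by have [r [y [Yy ->]] hr] := inf_adherent (invSn_gt0 R n) dist2_has_inf; exists y.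
by have [ys hys] := boolp.choice adherent; exists ys.
Qed.

Let minimizing_cauchy ys : minimizing ys -> cauchy_seq ys.
Proof.
move=> hys e e0.
have e4 : 0 < e ^+ 2 / 4 by rewrite divr_gt0 // exprn_gt0.
have [N hN] := invSn_small e4; exists N => m n hm hn.
rewrite rnorm_lt_sqr //.
have [Ym hm'] := hys m; have [Yn hn'] := hys n.
have hmid := inf_le_dist2 (Ylin 2%:R^-1 Yn (Ylin 2%:R^-1 Ym Y0)).
rewrite addr0 in hmid.
(* |ys m - ys n|^2 = 2 |v - ys n|^2 + 2 |v - ys m|^2 - 4 |v - midpoint|^2 *)
have := parallelogram (v - ys n) (v - ys m).
have -> : v - ys n + (v - ys m) =
    2%:R *: (v - ((2%:R^-1 : C) *: ys n + (2%:R^-1 : C) *: ys m)).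
  rewrite scalerBr scalerDr !scalerA mulfV ?pnatr_eq0 // !scale1r scaler_nat.
  by rewrite mulr2n opprD !addrA; congr (_ - _); rewrite addrAC.
have -> : v - ys n - (v - ys m) = ys m - ys n.
  by rewrite opprB addrC addrA addrNK.
rewrite sqnormZ normc_nat (_ : (2 : R) ^+ 2 = 4); last by rewrite expr2; lra.
have := hN _ hm; have := hN _ hn.
move: (inf dist2) (n.+1%:R^-1 : R) (m.+1%:R^-1 : R) (e ^+ 2) hmid hm' hn' => d a b E.
lra.
Qed.

Lemma closest_point_orth : exists2 p, Y p & forall w, Y w -> hip X (v - p) w = 0.
Proof.
have [ys hys] := minimizing_exists.
have [p hp] := cauchy_seq_tends (minimizing_cauchy hys).
exists p; first by apply: Ycl hp => n; case: (hys n).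
move=> w Yw; apply: normc_small_eq0 => e e0.
have e2 : 0 < e / 2 by rewrite divr_gt0.
have w1 : 0 < sqnorm w + 1 by rewrite ltr_wpDl ?sqnorm_ge0.
have w1' : 0 < rnorm w + 1 by rewrite ltr_wpDl ?rnorm_ge0.
have [N1 hN1] := invSn_small (divr_gt0 (exprn_gt0 2 e2) w1).
have [N2 hN2] := hp _ (divr_gt0 e2 w1').
set n := maxn N1 N2; have [Yn hn] := hys n.
have h1 : Normc.normc (hip X (v - ys n) w) < e / 2.
  have hmin : forall y, Y y -> sqnorm (v - ys n) <= sqnorm (v - y) + n.+1%:R^-1.
    by move=> y /inf_le_dist2 hy; apply/ltW/(lt_le_trans hn); rewrite lerD2r.
  have hc := near_min_orth Ylin Yn hmin Yw.
  have ht : n.+1%:R^-1 * (sqnorm w + 1) < (e / 2) ^+ 2.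
    by rewrite -ltr_pdivlMr //; exact: hN1 n (leq_maxl _ _).
  rewrite -(@ltr_pXn2r _ 2) // ?nnegrE ?normc_ge0 ?(ltW e2) //.
  apply: le_lt_trans hc (le_lt_trans _ ht).
  by rewrite ler_wpM2l ?lerDl // ltW ?invSn_gt0.
have h2 : rnorm (ys n - p) * (rnorm w + 1) < e / 2.
  by rewrite -ltr_pdivlMr //; exact: hN2 n (leq_maxr _ _).
have -> : v - p = (v - ys n) + (ys n - p) by rewrite addrA addrNK.
rewrite hipDl.
apply: le_trans (le_normcD _ _) _.
have := normc_hip_le (ys n - p) w.
have := rnorm_ge0 (ys n - p); have := rnorm_ge0 w; nra.
Qed.

End Projection.

Lemma closed_subspace_full (Y : X -> Prop) : Y 0 ->
  (forall (k : C) x y, Y x -> Y y -> Y (k *: x + y)) ->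
  (forall u l, (forall n, Y (u n)) -> tends_to u l -> Y l) ->
  (forall h, (forall y, Y y -> hip X h y = 0) -> h = 0) ->
  forall v, Y v.
Proof.
move=> Y0 Ylin Ycl Yperp v; have [p Yp hp] := closest_point_orth Y0 Ylin Ycl v.
by rewrite -(subrK p v) (Yperp _ hp) add0r.
Qed.

Lemma representable_limit (f : X -> C) (ws : nat -> X) (eps : nat -> R) :
  (forall k y, Normc.normc (hip X (ws k) y - f y) <= eps k * rnorm y) ->
  (forall e, 0 < e -> exists N, forall k, (N <= k)%N -> eps k < e) ->
  exists w, forall y, hip X w y = f y.
Proof.
move=> hw he.
have cyw : cauchy_seq ws.
  move=> e e0; have e2 : 0 < e / 2 by rewrite divr_gt0.
  have [N hN] := he _ e2; exists N => j k hj hk.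
  set d := ws j - ws k.
  have hd : rnorm d ^+ 2 <= (eps j + eps k) * rnorm d.
    rewrite -normc_hip_self.
    have -> : hip X d d = (hip X (ws j) d - f d) - (hip X (ws k) d - f d).
      by rewrite /d hipBl opprB addrA addrNK.
    apply: le_trans (le_normcD _ _) _.
    by rewrite normcN mulrDl lerD.
  have := hN _ hj; have := hN _ hk; have := rnorm_ge0 d.
  move: hd; move: (rnorm d) (eps j) (eps k) => a b c hd ? ? ?; nra.
have [w hw'] := cauchy_seq_tends cyw.
exists w => y; apply/eqP; rewrite -subr_eq0; apply/eqP/normc_small_eq0 => e e0.
have y1 : 0 < rnorm y + 1 by rewrite ltr_wpDl ?rnorm_ge0.
have dl : 0 < e / 2 / (rnorm y + 1) by rewrite !divr_gt0.
have [N1 h1] := he _ dl; have [N2 h2] := hw' _ dl.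
set k := maxn N1 N2.
have hk1 := h1 k (leq_maxl _ _); have hk2 := h2 k (leq_maxr _ _).
have -> : hip X w y - f y = hip X (w - ws k) y + (hip X (ws k) y - f y).
  by rewrite hipBl addrA addrNK.
apply: le_trans (le_normcD _ _) _.
have := normc_hip_le (w - ws k) y; rewrite rnormBC => hcs.
have := hw k y.
have : e / 2 / (rnorm y + 1) * (rnorm y + 1) = e / 2 by rewrite divfK // gt_eqF.
have := rnorm_ge0 (ws k - w); have := rnorm_ge0 y.
move: hcs hk1 hk2 dl.
move: (e / 2 / (rnorm y + 1)) (rnorm (ws k - w)) (eps k) (rnorm y).
move=> q a b c hcs hk1 hk2 dl ? ? hq hwk; nra.
Qed.

Lemma riesz_choiceP (f : X -> C) : (exists w, forall y, hip X w y = f y) ->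
  forall y,
  hip X (epsilon (inhabits 0) (fun w => forall y, hip X w y = f y)) y = f y.
Proof. exact: epsilon_spec. Qed.

Lemma riesz_choiceE (f : X -> C) w : (forall y, hip X w y = f y) ->
  epsilon (inhabits 0) (fun w => forall y, hip X w y = f y) = w.
Proof.
by move=> hw; apply: hip_injl => y; rewrite riesz_choiceP ?hw //; exists w.
Qed.

End HilbertSpace.

Arguments tends_to {R X}.
Arguments cauchy_seq {R X}.

(* In the application [q n] is a difference quotient of the Weyl function. *)
Section RepresentedLimit.
Variable R : realType.
Local Notation C := R[i].
Variables (H X Y : hilbert R) (phi : C -> Y -> H) (psi : X -> H)
  (q : C -> Y -> X) (c0 : C) (K L d0 : R).
Hypotheses (d0_gt0 : 0 < d0) (K_ge0 : 0 <= K) (L_ge0 : 0 <= L).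
Hypothesis psi_bounded : forall y', rnorm (psi y') <= K * rnorm y'.
Hypothesis phi_lipschitz : forall n y, Normc.normc (n - c0) < d0 ->
  rnorm (phi c0 y - phi n y) <= L * Normc.normc (n - c0) * rnorm y.
Hypothesis q_repr : forall n y y', Normc.normc (n - c0) < d0 -> n != c0 ->
  hip X (q n y) y' = hip H (phi n y) (psi y').

Let gap_bound n y y' : Normc.normc (n - c0) < d0 ->
  Normc.normc (hip H (phi c0 y - phi n y) (psi y')) <=
  L * Normc.normc (n - c0) * rnorm y * K * rnorm y'.
Proof.
move=> hn; apply: le_trans (normc_hip_le _ _) _.
rewrite -[_ * K * _]mulrA.
by apply: ler_pM; rewrite ?rnorm_ge0 ?phi_lipschitz ?psi_bounded.
Qed.

Let represented_at_center y :
  exists w, forall y', hip X w y' = hip H (phi c0 y) (psi y').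
Proof.
pose r k := d0 / 2 * (k.+1%:R : R)^-1.
have r_gt0 k : 0 < r k by rewrite /r mulr_gt0 ?divr_gt0 ?invSn_gt0.
have r_lt k : r k < d0.
  have : r k <= d0 / 2.
    by rewrite ler_piMr ?divr_ge0 ?(ltW d0_gt0) // invf_le1 ?ltr0Sn // ler1n.
  by move/le_lt_trans; apply; rewrite gtr_pMr ?invf_lt1 ?ltr1n.
pose nk k := c0 + ((r k)%:C)%C.
have dist_nk k : Normc.normc (nk k - c0) = r k.
  by rewrite /nk addrC addKr normc_real ger0_norm // ltW.
have nk_neq k : nk k != c0.
  apply/negP => /eqP h; have := dist_nk k; rewrite h subrr Normc.normc0.
  by move: (r_gt0 k); lra.
apply: (@representable_limit _ _ _ (fun k => q (nk k) y)
  (fun k => L * r k * rnorm y * K)).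
  move=> k y'; rewrite q_repr ?dist_nk // -hipBl -opprB hipNl normcN.
  by apply: le_trans (gap_bound _ _ _) _; rewrite dist_nk.
move=> e e0; set A := L * (d0 / 2) * rnorm y * K.
have A0 : 0 <= A by rewrite /A !mulr_ge0 ?rnorm_ge0 ?invr_ge0 ?ler0n // ltW.
have [N hN] := invSn_small (divr_gt0 e0 (ltr_wpDl A0 ltr01)).
exists N => k hk; have := hN _ hk.
rewrite (_ : L * r k * rnorm y * K = A * (k.+1%:R)^-1); last by rewrite /A /r; ring.
rewrite ltr_pdivlMr ?ltr_wpDl //.
have := invSn_gt0 R k; move: ((k.+1%:R : R)^-1) => t t0 ht; nra.
Qed.

Lemma represented_op_cvg (target : Y -> X) :
  (forall y, (exists w, forall y', hip X w y' = hip H (phi c0 y) (psi y')) ->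
    forall y', hip X (target y) y' = hip H (phi c0 y) (psi y')) ->
  forall e : C, 0 < e -> exists d : C, 0 < d /\ forall n, n != c0 ->
    `|n - c0| < d -> forall y, hnorm (target y - q n y) <= e * hnorm y.
Proof.
move=> htarget e e0.
have E0 := Re_gt0 e0; set E := complex.Re e in E0.
have LK0 : 0 < L * K + 1 by rewrite ltr_wpDl ?mulr_ge0.
exists ((Num.min d0 (E / (L * K + 1)))%:C)%C; split.
  by rewrite ltcR lt_min d0_gt0 divr_gt0.
move=> n hn hd y.
have : Normc.normc (n - c0) < Num.min d0 (E / (L * K + 1)) by rewrite -ltcR.
rewrite lt_min => /andP[hd1 hd2].
have hb : rnorm (target y - q n y) <= L * Normc.normc (n - c0) * rnorm y * K.
  apply: rnorm_le_dual; first by rewrite !mulr_ge0 ?rnorm_ge0 ?normc_ge0.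
  move=> y'; rewrite hipBl htarget ?represented_at_center // q_repr // -hipBl.
  exact: gap_bound.
rewrite !hnormE (ge0_complexE (ltW e0)) -/E -rmorphM lecR.
apply: le_trans hb _.
move: hd2; rewrite ltr_pdivlMr // => hd2.
have := normc_ge0 (n - c0); have := rnorm_ge0 y.
have : 0 <= L * K by rewrite mulr_ge0.
rewrite (_ : L * Normc.normc (n - c0) * rnorm y * K =
  (L * K) * Normc.normc (n - c0) * rnorm y); last by ring.
move: (Normc.normc (n - c0)) (rnorm y) (L * K) hd2 => a b c hd2 ? ? ?; nra.
Qed.

End RepresentedLimit.

Definition kip (R : realType) (H : hilbert R) (a b : H * H) : R[i] :=
  hip H a.1 b.1 - hip H a.2 b.2.

(* An abstract A_T^{perp_s} with its boundary maps, where [kform] = 'i * [kip];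
   green_max encodes A_T^{perp_s} = (ker Gamma)^{perp_s}.  Swapping the two
   components (green_space_flip) exchanges the roles of D_+ and D_-. *)
Record green_space (R : realType) (H X1 X2 : hilbert R) (V : H * H -> Prop)
    (G1 : H * H -> X1) (G2 : H * H -> X2) : Prop := GreenSpace {
  green_lin : forall (k : R[i]) a b, V a -> V b ->
    G1 (k *: a.1 + b.1, k *: a.2 + b.2) = k *: G1 a + G1 b /\
    G2 (k *: a.1 + b.1, k *: a.2 + b.2) = k *: G2 a + G2 b;
  green_bounded : exists M : R[i], forall a, V a ->
    hip X1 (G1 a) (G1 a) + hip X2 (G2 a) (G2 a)
      <= M * (hip H a.1 a.1 + hip H a.2 a.2);
  green_onto : forall y1 y2, exists a, V a /\ G1 a = y1 /\ G2 a = y2;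
  green_identity : forall a b, V a -> V b ->
    kip a b = hip X1 (G1 a) (G1 b) - hip X2 (G2 a) (G2 b);
  green_max : forall e,
    (forall c, V c -> G1 c = 0 -> G2 c = 0 -> kip e c = 0) -> V e
}.

Section KreinProduct.
Variables (R : realType) (H : hilbert R).
Local Notation C := R[i].

Lemma kip_linl (k : C) (a b c : H * H) :
  kip (k *: a.1 + b.1, k *: a.2 + b.2) c = k * kip a c + kip b c.
Proof. by rewrite /kip /= !hip_linl; ring. Qed.

Lemma kip_flip (a b : H * H) : kip (a.2, a.1) (b.2, b.1) = - kip a b.
Proof. by rewrite /kip opprB. Qed.

Lemma kip_defect_pp (l m : C) (a b : H * H) : a.2 = l *: a.1 -> b.2 = m *: b.1 ->
  kip a b = (1 - l * m^*) * hip H a.1 b.1.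
Proof. by move=> ha hb; rewrite /kip ha hb hipZl hipZr; ring. Qed.

Lemma kip_defect_mm (l m : C) (a b : H * H) : a.1 = l *: a.2 -> b.1 = m *: b.2 ->
  kip a b = - (1 - l * m^*) * hip H a.2 b.2.
Proof. by move=> ha hb; rewrite /kip ha hb hipZl hipZr; ring. Qed.

Lemma kip_defect_pm (l m : C) (a b : H * H) : a.2 = l *: a.1 -> b.1 = m *: b.2 ->
  kip a b = (m^* - l) * hip H a.1 b.2.
Proof. by move=> ha hb; rewrite /kip ha hb hipZl hipZr; ring. Qed.

Lemma kip_defect_mp (l m : C) (a b : H * H) : a.1 = l *: a.2 -> b.2 = m *: b.1 ->
  kip a b = (l - m^*) * hip H a.2 b.1.
Proof. by move=> ha hb; rewrite /kip ha hb hipZl hipZr; ring. Qed.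

End KreinProduct.

Lemma green_space_flip (R : realType) (H X1 X2 : hilbert R) (V : H * H -> Prop)
    (G1 : H * H -> X1) (G2 : H * H -> X2) :
  green_space V G1 G2 ->
  green_space (fun a => V (a.2, a.1)) (fun a => G2 (a.2, a.1))
    (fun a => G1 (a.2, a.1)).
Proof.
case=> Glin [M hM] Gonto Ggreen Gmax; split.
- by move=> k a b ha hb; have [h1 h2] := Glin k _ _ ha hb.
- exists M => a /hM; rewrite /= addrC => /le_trans; apply.
  by rewrite [hip H a.2 _ + _]addrC.
- by move=> y2 y1; have [[a1 a2] [Va [h1 h2]]] := Gonto y1 y2; exists (a2, a1).
- move=> [a1 a2] [b1 b2] ha hb; have /= -> := kip_flip (a2, a1) (b2, b1).
  by rewrite Ggreen // opprB.
- move=> [e1 e2] he; apply: Gmax => -[c1 c2] Vc G1c G2c.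
  by have /= -> := kip_flip (e1, e2) (c2, c1); rewrite he ?oppr0.
Qed.

Section GreenSpace.
Variables (R : realType) (H X1 X2 : hilbert R) (V : H * H -> Prop)
  (G1 : H * H -> X1) (G2 : H * H -> X2).
Hypothesis gV : green_space V G1 G2.
Local Notation C := R[i].

Lemma green_ker_orth a c : V a -> V c -> G1 c = 0 -> G2 c = 0 -> kip a c = 0.
Proof. by move=> Va Vc h1 h2; rewrite (green_identity gV) // h1 h2 !hip0r subrr. Qed.

Lemma green_domZD (k : C) a b : V a -> V b -> V (k *: a.1 + b.1, k *: a.2 + b.2).
Proof.
move=> Va Vb; apply: (green_max gV) => c Vc h1 h2.
by rewrite kip_linl !(green_ker_orth _ Vc) // mulr0 addr0.
Qed.

Lemma green_dom0 : V (0, 0).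
Proof. by apply: (green_max gV) => c _ _ _; rewrite /kip !hip0l subrr. Qed.

Lemma green_domB a b : V a -> V b -> V (a.1 - b.1, a.2 - b.2).
Proof.
move=> Va Vb; have := green_domZD (-1) Vb Va; rewrite !scaleN1r.
by rewrite [- _ + a.1]addrC [- _ + a.2]addrC.
Qed.

Lemma green_linB a b : V a -> V b ->
  G1 (a.1 - b.1, a.2 - b.2) = G1 a - G1 b /\
  G2 (a.1 - b.1, a.2 - b.2) = G2 a - G2 b.
Proof.
move=> Va Vb; have := green_lin gV (-1) Vb Va; rewrite !scaleN1r.
by rewrite [- _ + a.1]addrC [- _ + a.2]addrC [- G1 b + _]addrC [- G2 b + _]addrC.
Qed.

Lemma green_lin0 : G1 (0, 0) = 0.
Proof.
have [h _] := green_linB green_dom0 green_dom0.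
by rewrite subrr in h; rewrite h subrr.
Qed.

Lemma green_dom_closed (u : nat -> H * H) x1 x2 : (forall n, V (u n)) ->
  tends_to (fun n => (u n).1) x1 -> tends_to (fun n => (u n).2) x2 -> V (x1, x2).
Proof.
move=> Vu c1 c2; apply: (green_max gV) => b Vb h1 h2; apply: normc_small_eq0 => e e0.
have b0 : 0 < rnorm b.1 + rnorm b.2 + 1 by rewrite ltr_wpDl ?addr_ge0 ?rnorm_ge0.
have dl : 0 < e / 2 / (rnorm b.1 + rnorm b.2 + 1) by rewrite !divr_gt0.
have [N1 hN1] := c1 _ dl; have [N2 hN2] := c2 _ dl.
set n := maxn N1 N2.
have hn1 := hN1 n (leq_maxl _ _); have hn2 := hN2 n (leq_maxr _ _).
have -> : kip (x1, x2) b =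
    (hip H (x1 - (u n).1) b.1 - hip H (x2 - (u n).2) b.2) + kip (u n) b.
  by rewrite /kip !hipBl /=; ring.
rewrite (green_ker_orth (Vu n) Vb) // addr0.
apply: le_trans (le_normcD _ _) _; rewrite normcN.
have := normc_hip_le (x1 - (u n).1) b.1; have := normc_hip_le (x2 - (u n).2) b.2.
rewrite !(rnormBC _ (u n).1) !(rnormBC _ (u n).2).
have : e / 2 / (rnorm b.1 + rnorm b.2 + 1) * (rnorm b.1 + rnorm b.2 + 1) = e / 2.
  by rewrite divfK // gt_eqF.
have := rnorm_ge0 b.1; have := rnorm_ge0 b.2.
have := rnorm_ge0 ((u n).1 - x1); have := rnorm_ge0 ((u n).2 - x2).
move: hn1 hn2 dl; move: (e / 2 / (rnorm b.1 + rnorm b.2 + 1)) (rnorm b.1) (rnorm b.2)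
  (rnorm ((u n).1 - x1)) (rnorm ((u n).2 - x2)) => q a1 a2 z1 z2.
move=> hn1 hn2 dl ? ? ? ? hq hc2 hc1; nra.
Qed.

Lemma green_self a : V a ->
  sqnorm a.1 - sqnorm a.2 = sqnorm (G1 a) - sqnorm (G2 a).
Proof.
move=> Va; apply: (@complexI R); rewrite !rmorphB /= -!hip_selfE.
exact: (green_identity gV).
Qed.

Lemma green_G1_bounded : exists2 K : R, 0 < K &
  forall a, V a -> sqnorm (G1 a) <= K * (sqnorm a.1 + sqnorm a.2).
Proof.
have [M hM] := green_bounded gV.
exists (`|complex.Re M| + 1); first by rewrite ltr_wpDl.
move=> a Va; have := lec_Re (hM _ Va); rewrite !hip_selfE -!rmorphD /= ReMr.
have := sqnorm_ge0 (G2 a); have := sqnorm_ge0 a.1; have := sqnorm_ge0 a.2.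
have := ler_norm (complex.Re M); have := normr_ge0 (complex.Re M).
move: (complex.Re M) `|complex.Re M| => m1 am ? ? ? ? ? ?; nra.
Qed.

Lemma green_G1_ker_closed (u : nat -> H * H) x : (forall n, V (u n)) -> V x ->
  tends_to (fun n => (u n).1) x.1 -> tends_to (fun n => (u n).2) x.2 ->
  (forall n, G1 (u n) = 0) -> G1 x = 0.
Proof.
move=> Vu Vx c1 c2 G0; have [K K0 hK] := green_G1_bounded.
apply: sqnorm0_eq0; apply/eqP; rewrite eq_le sqnorm_ge0 andbT.
apply: ler0_small => e e0.
have eK : 0 < e / (2 * K) by rewrite divr_gt0 // mulr_gt0.
have d0 : 0 < Num.sqrt (e / (2 * K)) by rewrite sqrtr_gt0.
have [N1 h1] := c1 _ d0; have [N2 h2] := c2 _ d0.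
set n := maxn N1 N2.
have := h1 n (leq_maxl _ _); have := h2 n (leq_maxr _ _).
rewrite !rnorm_lt_sqr // sqr_sqrtr ?(ltW eK) // => hb ha.
have hd := hK _ (green_domB Vx (Vu n)).
rewrite (proj1 (green_linB Vx (Vu n))) G0 subr0 /= in hd.
rewrite !sqnormE (rnormBC x.1) (rnormBC x.2) -!sqnormE in hd.
apply: le_trans hd _.
have -> : e = K * (e / (2 * K) + e / (2 * K)) by field; rewrite gt_eqF.
by rewrite ler_pM2l //; apply: lerD; apply: ltW.
Qed.

Lemma green_G1_ker_rnorm a : V a -> G1 a = 0 -> rnorm a.1 <= rnorm a.2.
Proof.
move=> Va G1a; have := green_self Va; rewrite G1a /sqnorm hip0l /=.
rewrite -/(sqnorm a.1) -/(sqnorm a.2) !sqnormE => h.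
have := sqnorm_ge0 (G2 a); have := rnorm_ge0 a.1; have := rnorm_ge0 a.2; nra.
Qed.


Section Defect.
Variable l : C.
Hypothesis l_lt1 : Normc.normc l < 1.

Let dc (a : H * H) := a.2 - l *: a.1.

Let dcB a b : dc (a.1 - b.1, a.2 - b.2) = dc a - dc b.
Proof.
by rewrite /dc /= scalerBr !opprB addrACA [RHS]addrACA [- b.2 + _]addrC.
Qed.

Let dcZD (k : C) a b : dc (k *: a.1 + b.1, k *: a.2 + b.2) = k *: dc a + dc b.
Proof. by rewrite /dc /= scalerDr !scalerBr !scalerA mulrC opprD addrACA. Qed.

Let ker_dc v := exists c, [/\ V c, G1 c = 0 & v = dc c].

Let ker_dc_coercive c : V c -> G1 c = 0 ->
  rnorm c.1 <= rnorm c.2 /\ rnorm c.2 * (1 - Normc.normc l) <= rnorm (dc c).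
Proof.
move=> Vc G1c; have h1 := green_G1_ker_rnorm Vc G1c; split => //.
have := rnormD (dc c) (l *: c.1); rewrite /dc addrNK rnormZ.
have := normc_ge0 l; have := rnorm_ge0 c.1; nra.
Qed.

Let ker_dc_closed u v : (forall n, ker_dc (u n)) -> tends_to u v -> ker_dc v.
Proof.
move=> Yu cvu; have [cs hcs] := boolp.choice Yu.
have Vcs n : V (cs n) by case: (hcs n).
have G1cs n : G1 (cs n) = 0 by case: (hcs n).
have ucs n : u n = dc (cs n) by case: (hcs n).
have key m n : rnorm ((cs m).1 - (cs n).1) <= rnorm ((cs m).2 - (cs n).2) /\
    rnorm ((cs m).2 - (cs n).2) * (1 - Normc.normc l) <= rnorm (u m - u n).
  rewrite !ucs -dcB.
  apply: (@ker_dc_coercive ((cs m).1 - (cs n).1, (cs m).2 - (cs n).2)).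
    exact: green_domB.
  by rewrite (proj1 (green_linB (Vcs m) (Vcs n))) !G1cs subrr.
have cy2 : cauchy_seq (fun n => (cs n).2).
  move=> e e0; have e1 : 0 < e * (1 - Normc.normc l) by rewrite mulr_gt0 // subr_gt0.
  have [N hN] := tends_to_cauchy cvu e1; exists N => m n hm hn.
  have [_ h] := key m n.
  by have := le_lt_trans h (hN _ _ hm hn); rewrite ltr_pM2r ?subr_gt0.
have cy1 : cauchy_seq (fun n => (cs n).1).
  move=> e e0; have [N hN] := cy2 _ e0; exists N => m n hm hn.
  exact: le_lt_trans (proj1 (key m n)) (hN _ _ hm hn).
have [x1 hx1] := cauchy_seq_tends cy1; have [x2 hx2] := cauchy_seq_tends cy2.
have Vx : V (x1, x2) := green_dom_closed Vcs hx1 hx2.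
exists (x1, x2); split => //; first exact: green_G1_ker_closed Vcs Vx hx1 hx2 G1cs.
have := tends_toZD (- l) hx1 hx2.
have -> : (fun n => (- l) *: (cs n).1 + (cs n).2) = u.
  by apply: boolp.funext => n; rewrite ucs /dc scaleNr addrC.
by move/(tends_to_unique cvu) ->; rewrite /dc scaleNr addrC.
Qed.

Let ker_dc_orth0 h : (forall y, ker_dc y -> hip H h y = 0) -> h = 0.
Proof.
(* e is kip-orthogonal to ker G1, hence in V; Green's identity then forces
   G2 e = 0, and |l| < 1 forces h = 0. *)
move=> hperp; set e := (l^* *: h, h).
have e_orth c : V c -> G1 c = 0 -> kip e c = 0.
  move=> Vc G1c; have := hperp _ (ex_intro _ c (And3 Vc G1c erefl)).
  rewrite /dc hipBr hipZr /kip /= hipZl => hh.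
  by rewrite -[LHS]opprK opprB hh oppr0.
have Ve : V e by apply: (green_max gV) => c Vc G1c _; exact: e_orth.
have [c [Vc [G1c G2c]]] := green_onto gV 0 (G2 e).
have g := green_identity gV Ve Vc; rewrite e_orth // G1c G2c hip0r sub0r in g.
have G2e : sqnorm (G2 e) = 0.
  by rewrite /sqnorm; move/eqP: g; rewrite eq_sym oppr_eq0 => /eqP ->.
have := green_self Ve; rewrite G2e subr0 /= sqnormZ normc_conj => h2.
have := sqnorm_ge0 (G1 e); have := sqnorm_ge0 h; rewrite -h2 => ? ?.
have hl2 : Normc.normc l ^+ 2 < 1 by rewrite expr_lt1 ?normc_ge0.
apply: sqnorm0_eq0; nra.
Qed.

Lemma green_defect_onto z : exists a, [/\ V a, a.2 = l *: a.1 & G1 a = z].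
Proof.
have ker_dc_full : forall v, ker_dc v.
  apply: closed_subspace_full ker_dc_closed ker_dc_orth0.
  - exists (0, 0); split; [exact: green_dom0 | exact: green_lin0 |].
    by rewrite /dc /= scaler0 subr0.
  - move=> k x y [c [Vc G1c ->]] [c' [Vc' G1c' ->]].
    exists (k *: c.1 + c'.1, k *: c.2 + c'.2); rewrite dcZD; split=> //.
      exact: green_domZD.
    by rewrite (proj1 (green_lin gV k Vc Vc')) G1c G1c' scaler0 addr0.
have [b [Vb [G1b _]]] := green_onto gV z 0.
have [c [Vc G1c hc]] := ker_dc_full (dc b).
exists (b.1 - c.1, b.2 - c.2); split; first exact: green_domB.
  by apply/eqP; rewrite -subr_eq0 -/(dc (_, _)) dcB hc subrr.
by rewrite (proj1 (green_linB Vb Vc)) G1b G1c subr0.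
Qed.

Lemma green_defect_rnorm a : V a -> a.2 = l *: a.1 ->
  rnorm a.1 * (1 - Normc.normc l) <= rnorm (G1 a).
Proof.
move=> Va ha; have := green_self Va; rewrite ha sqnormZ !sqnormE.
have := rnorm_ge0 (G2 a); have := normc_ge0 l; have := rnorm_ge0 a.1.
have := rnorm_ge0 (G1 a); move: (Normc.normc l) l_lt1 => p l1 ? ? ? ? h.
have hp : 0 <= 1 - p by lra.
suff : (rnorm a.1 * (1 - p)) ^+ 2 <= rnorm (G1 a) ^+ 2.
  by rewrite ler_pXn2r // ?nnegrE // mulr_ge0.
rewrite exprMn; nra.
Qed.

End Defect.

Lemma green_defect_diff l n a b : V a -> a.2 = l *: a.1 -> V b -> b.2 = n *: b.1 ->
  G1 a = G1 b ->
  (1 - Normc.normc l) * rnorm (a.1 - b.1) <= Normc.normc (l - n) * rnorm b.1.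
Proof.
move=> Va ha Vb hb hab.
have G1d : G1 (a.1 - b.1, a.2 - b.2) = 0.
  by rewrite (proj1 (green_linB Va Vb)) hab subrr.
have := green_G1_ker_rnorm (green_domB Va Vb) G1d; rewrite /= ha hb.
rewrite (_ : l *: a.1 - n *: b.1 = l *: (a.1 - b.1) + (l - n) *: b.1); last first.
  by rewrite scalerBr scalerBl addrA addrNK.
have := rnormD (l *: (a.1 - b.1)) ((l - n) *: b.1); rewrite !rnormZ.
have := rnorm_ge0 (a.1 - b.1); nra.
Qed.

Lemma green_defect_lipschitz l n y a b : Normc.normc l < 1 ->
  Normc.normc (n - l) < (1 - Normc.normc l) / 2 ->
  V a -> a.2 = l *: a.1 -> G1 a = y -> V b -> b.2 = n *: b.1 -> G1 b = y ->
  rnorm (a.1 - b.1) <= 2 / (1 - Normc.normc l) ^+ 2 * Normc.normc (n - l) * rnorm y.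
Proof.
move=> l1 nl Va ha Ga Vb hb Gb.
have hdiff := green_defect_diff Va ha Vb hb (etrans Ga (esym Gb)).
rewrite -[l - n]opprB normcN in hdiff.
have hn := normc_near nl.
have hb1 := green_defect_rnorm (normc_near_lt1 l1 nl) Vb hb.
rewrite Gb in hb1.
have := normc_ge0 l; have := normc_ge0 (n - l); have := rnorm_ge0 b.1.
have := rnorm_ge0 (a.1 - b.1); have := rnorm_ge0 y.
move: hdiff hb1 hn nl l1.
move: (Normc.normc l) (Normc.normc n) (Normc.normc (n - l)) (rnorm b.1)
  (rnorm (a.1 - b.1)) (rnorm y) => p pn q nb nd ny hdiff hb1 hn nl l1 ? ? ? ? ?.
have t0 : 0 < 1 - p by lra.
have hb2 : nb * (1 - p) <= 2 * ny by nra.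
have h3 : nd * (1 - p) ^+ 2 <= 2 * q * ny.
  rewrite expr2 mulrA.
  have : nd * (1 - p) * (1 - p) <= q * nb * (1 - p) by rewrite ler_pM2r // mulrC.
  nra.
rewrite (_ : 2 / (1 - p) ^+ 2 * q * ny = 2 * q * ny / (1 - p) ^+ 2); last by ring.
by rewrite ler_pdivlMr // exprn_gt0.
Qed.

End GreenSpace.

Section BoundaryQuadruple.
Variables (R : realType) (H : hilbert R) (T : H -> H) (Hp Hm : hilbert R)
  (Gp : H * H -> Hp) (Gm : H * H -> Hm).
Hypothesis hBQ : boundary_quadruple T Gp Gm.
Local Notation C := R[i].
Local Notation B := (Weyl T Gp Gm).

Lemma green_space_ATperp : green_space (ATperp T) Gp Gm.
Proof.
have i0 : ('i : C) != 0 by exact: neq0Ci.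
case: hBQ => Glin [[M hM] [Gonto [Gker Ggreen]]]; split => //.
- by exists M.
- move=> a b Va Vb; apply: (mulfI i0).
  by rewrite [RHS]mulrBr -(Ggreen a b Va Vb) /kform /kip mulrBr.
- move=> e he b ATb; have [Vb [Gpb Gmb]] := proj2 (Gker b) ATb.
  by rewrite /kform -mulrBr -/(kip e b) he ?mulr0.
Qed.

Local Notation gs := green_space_ATperp.

Lemma gammap_spec l y : Normc.normc l < 1 ->
  [/\ ATperp T (gammap T Gp l y), (gammap T Gp l y).2 = l *: (gammap T Gp l y).1
    & Gp (gammap T Gp l y) = y].
Proof.
move=> hl; have [[a1 a2] [Va /= ha Ga]] := green_defect_onto gs hl y.
have : exists a, Nplus T l a /\ Gp a = y.
  by exists (a1, a2); split => //; split => //; exists a1; rewrite ha.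
move/(epsilon_spec (inhabits (0, 0))); rewrite -/(gammap T Gp l y).
by case: (gammap T Gp l y) => g1 g2 [[[x [-> ->]] Vg] Gg].
Qed.

Lemma gammam_spec l y : Normc.normc l < 1 ->
  [/\ ATperp T (gammam T Gm l y), (gammam T Gm l y).1 = l *: (gammam T Gm l y).2
    & Gm (gammam T Gm l y) = y].
Proof.
move=> hl.
have [[a1 a2] [Va /= ha Ga]] := green_defect_onto (green_space_flip gs) hl y.
have : exists a, Nminus T l a /\ Gm a = y.
  by exists (a2, a1); split => //; split => //; exists a1; rewrite ha.
move/(epsilon_spec (inhabits (0, 0))); rewrite -/(gammam T Gm l y).
by case: (gammam T Gm l y) => g1 g2 [[[x [-> ->]] Vg] Gg].
Qed.

Lemma Weyl_adjoint_repr m u y : Normc.normc m < 1 ->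
  hip Hm (B m u) y = hip Hp u (Gp (gammam T Gm m^* y)).
Proof.
(* Green's identity for gamma_+(m) u and gamma_-(conj m) y, whose left-hand
   side vanishes. *)
move=> hm; have [Va ha Ga] := gammap_spec u hm.
have [Vb hb Gb] := gammam_spec y (normc_conj_lt1 hm).
have := green_identity gs Va Vb; rewrite (kip_defect_pm ha hb) conjCK subrr mul0r.
by rewrite Ga Gb => /eqP; rewrite eq_sym subr_eq0 => /eqP.
Qed.

Lemma Weyl_adjointP m u y : Normc.normc m < 1 ->
  hip Hm (B m u) y = hip Hp u (adjoint (B m) y).
Proof.
move=> hm; move: u; apply: (epsilon_spec (inhabits (0 : Hp))
  (fun x => forall u, hip Hm (B m u) y = hip Hp u x)).
by exists (Gp (gammam T Gm m^* y)) => u; exact: Weyl_adjoint_repr.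
Qed.

Lemma Weyl_adjointE m y : Normc.normc m < 1 ->
  adjoint (B m) y = Gp (gammam T Gm m^* y).
Proof.
by move=> hm; apply: hip_injr => u; rewrite -Weyl_adjointP // Weyl_adjoint_repr.
Qed.

Lemma phip_rnorm l y : Normc.normc l < 1 ->
  rnorm (phip T Gp l y) <= (1 - Normc.normc l)^-1 * rnorm y.
Proof.
move=> hl; have [Va ha Ga] := gammap_spec y hl.
have := green_defect_rnorm gs hl Va ha; rewrite Ga /phip.
by rewrite [_^-1 * _]mulrC ler_pdivlMr ?subr_gt0.
Qed.

Lemma phim_rnorm l y : Normc.normc l < 1 ->
  rnorm (phim T Gm l y) <= (1 - Normc.normc l)^-1 * rnorm y.
Proof.
move=> hl; rewrite /phim; move: (gammam_spec y hl).
case: (gammam T Gm l y) => a1 a2 /= [Va ha Ga].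
have := green_defect_rnorm (a := (a2, a1)) (green_space_flip gs) hl Va ha.
by rewrite /= Ga [_^-1 * _]mulrC ler_pdivlMr ?subr_gt0.
Qed.

Lemma phip_lipschitz l n y : Normc.normc l < 1 ->
  Normc.normc (n - l) < (1 - Normc.normc l) / 2 ->
  rnorm (phip T Gp l y - phip T Gp n y)
    <= 2 / (1 - Normc.normc l) ^+ 2 * Normc.normc (n - l) * rnorm y.
Proof.
move=> hl hn; have hn1 := normc_near_lt1 hl hn.
have [Va ha Ga] := gammap_spec y hl; have [Vb hb Gb] := gammap_spec y hn1.
exact: (green_defect_lipschitz gs hl hn Va ha Ga Vb hb Gb).
Qed.

Lemma phim_lipschitz l n y : Normc.normc l < 1 ->
  Normc.normc (n - l) < (1 - Normc.normc l) / 2 ->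
  rnorm (phim T Gm l y - phim T Gm n y)
    <= 2 / (1 - Normc.normc l) ^+ 2 * Normc.normc (n - l) * rnorm y.
Proof.
move=> hl hn; have hn1 := normc_near_lt1 hl hn.
rewrite /phim; move: (gammam_spec y hl) (gammam_spec y hn1).
case: (gammam T Gm l y) => a1 a2 /= [Va ha Ga].
case: (gammam T Gm n y) => b1 b2 /= [Vb hb Gb].
exact: (green_defect_lipschitz (a := (a2, a1)) (b := (b2, b1))
  (green_space_flip gs) hl hn Va ha Ga Vb hb Gb).
Qed.

Lemma Kpp_formula l m y : Normc.normc l < 1 -> Normc.normc m < 1 ->
  Kpp T Gm l m y = (1 - l * m^*)^-1 *: (y - B l (adjoint (B m) y)).
Proof.
move=> hl hm; apply: riesz_choiceE => y'; rewrite /hat /phim.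
have [Va ha Ga] := gammam_spec y (normc_conj_lt1 hm).
have [Vb hb Gb] := gammam_spec y' (normc_conj_lt1 hl).
have := green_identity gs Va Vb; rewrite (kip_defect_mm ha hb) conjCK Ga Gb.
rewrite -!Weyl_adjointE // -(Weyl_adjointP _ _ hl) hipZl hipBl.
set X := hip H _ _ => g; apply: (mulfI (onem_mul_conj_neq0 hl hm)).
rewrite mulrA mulfV ?onem_mul_conj_neq0 // mul1r -[LHS]opprB -g; ring.
Qed.

Lemma Kmm_formula l m y : Normc.normc l < 1 -> Normc.normc m < 1 ->
  Kmm T Gp l m y = (1 - l * m^*)^-1 *: (y - adjoint (B l^*) (B m^* y)).
Proof.
move=> hl hm; apply: riesz_choiceE => y'; rewrite /hat /phip.
have [Va ha Ga] := gammap_spec y (normc_conj_lt1 hm).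
have [Vb hb Gb] := gammap_spec y' (normc_conj_lt1 hl).
have := green_identity gs Va Vb; rewrite (kip_defect_pp ha hb) conjCK Ga Gb.
rewrite hipZl hipBl (hip_sym y' (adjoint _ _)).
rewrite -(Weyl_adjointP _ _ (normc_conj_lt1 hl)) -hip_sym.
set X := hip H _ _ => g; apply: (mulfI (onem_mul_conj_neq0 hl hm)).
by rewrite mulrA mulfV ?onem_mul_conj_neq0 // mul1r -g; ring.
Qed.

Lemma Kpm_quotient_repr l n y y' : Normc.normc l < 1 -> Normc.normc n < 1 ->
  l != n ->
  hip Hm ((l - n)^-1 *: (B l y - B n y)) y' =
  hip H (phip T Gp n y) (phim T Gm l^* y').
Proof.
move=> hl hn ln; have [Va ha Ga] := gammap_spec y hn.
have [Vb hb Gb] := gammam_spec y' (normc_conj_lt1 hl).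
have := green_identity gs Va Vb; rewrite (kip_defect_pm ha hb) conjCK Ga Gb.
rewrite -Weyl_adjoint_repr // hipZl hipBl /phip /phim.
set X := hip H _ _ => g; have ln0 : l - n != 0 by rewrite subr_eq0.
by apply: (mulfI ln0); rewrite mulrA mulfV // mul1r g.
Qed.

Lemma Kmp_quotient_repr l n y y' : Normc.normc l < 1 -> Normc.normc n < 1 ->
  l != n^* ->
  hip Hp ((l - n^*)^-1 *: (adjoint (B l^*) y - adjoint (B n) y)) y' =
  hip H (phim T Gm n^* y) (phip T Gp l^* y').
Proof.
move=> hl hn ln; have [Va ha Ga] := gammam_spec y (normc_conj_lt1 hn).
have [Vb hb Gb] := gammap_spec y' (normc_conj_lt1 hl).
have := green_identity gs Va Vb; rewrite (kip_defect_mp ha hb) conjCK Ga Gb.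
rewrite -Weyl_adjointE // (hip_sym (B l^* y')) Weyl_adjointP ?normc_conj_lt1 //.
rewrite -hip_sym hipZl hipBl /phip /phim.
set X := hip H _ _ => g; have ln0 : l - n^* != 0 by rewrite subr_eq0.
by apply: (mulfI ln0); rewrite mulrA mulfV // mul1r -opprB -g; ring.
Qed.

Lemma Kpm_formula l m y : Normc.normc l < 1 -> Normc.normc m < 1 -> l != m^* ->
  Kpm T Gp Gm l m y = (l - m^*)^-1 *: (B l y - B m^* y).
Proof.
move=> hl hm lm; apply: riesz_choiceE => y'.
exact: Kpm_quotient_repr hl (normc_conj_lt1 hm) lm.
Qed.

Lemma Kmp_formula l m y : Normc.normc l < 1 -> Normc.normc m < 1 -> l != m^* ->
  Kmp T Gp Gm l m y = (l - m^*)^-1 *: (adjoint (B l^*) y - adjoint (B m) y).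
Proof.
move=> hl hm lm; apply: riesz_choiceE => y'.
exact: Kmp_quotient_repr hl hm lm.
Qed.

Lemma Kpm_conj_limit l : Normc.normc l < 1 -> forall e : C, 0 < e ->
  exists d : C, 0 < d /\ forall n, n != l -> `|n - l| < d -> forall y,
    hnorm (Kpm T Gp Gm l l^* y - (l - n)^-1 *: (B l y - B n y)) <= e * hnorm y.
Proof.
move=> hl; have p1 : 0 < 1 - Normc.normc l by rewrite subr_gt0.
apply: (@represented_op_cvg _ _ _ _ (phip T Gp) (phim T Gm l^*)
  (fun n y => (l - n)^-1 *: (B l y - B n y)) l ((1 - Normc.normc l)^-1)
  (2 / (1 - Normc.normc l) ^+ 2) ((1 - Normc.normc l) / 2)).
- by rewrite divr_gt0.
- by rewrite invr_ge0 ltW.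
- by rewrite divr_ge0 ?exprn_ge0 ?ltW.
- by move=> y'; rewrite -(normc_conj l) phim_rnorm ?normc_conj_lt1.
- by move=> n y hn; exact: phip_lipschitz.
- move=> n y y' hn nl; rewrite Kpm_quotient_repr // 1?eq_sym //.
  exact: normc_near_lt1 hl hn.
- by move=> y hrep; rewrite /Kpm conjCK; exact: riesz_choiceP.
Qed.

Lemma Kmp_conj_limit l : Normc.normc l < 1 -> forall e : C, 0 < e ->
  exists d : C, 0 < d /\ forall n, n != l^* -> `|n - l^*| < d -> forall y,
    hnorm (Kmp T Gp Gm l l^* y -
      (l - n^*)^-1 *: (adjoint (B l^*) y - adjoint (B n) y)) <= e * hnorm y.
Proof.
move=> hl; have p1 : 0 < 1 - Normc.normc l by rewrite subr_gt0.
have conj_dist n : Normc.normc (n^* - l) = Normc.normc (n - l^*).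
  by rewrite -normc_conj rmorphB /= conjCK.
apply: (@represented_op_cvg _ _ _ _ (fun n => phim T Gm n^*) (phip T Gp l^*)
  (fun n y => (l - n^*)^-1 *: (adjoint (B l^*) y - adjoint (B n) y)) l^*
  ((1 - Normc.normc l)^-1) (2 / (1 - Normc.normc l) ^+ 2)
  ((1 - Normc.normc l) / 2)).
- by rewrite divr_gt0.
- by rewrite invr_ge0 ltW.
- by rewrite divr_ge0 ?exprn_ge0 ?ltW.
- by move=> y'; rewrite -(normc_conj l) phip_rnorm ?normc_conj_lt1.
- move=> n y; rewrite -conj_dist conjCK => hn.
  exact: phim_lipschitz.
- move=> n y y' hn nl; rewrite Kmp_quotient_repr //.
    by rewrite -normc_conj; apply: normc_near_lt1 hl _; rewrite conj_dist.
  by apply: contra nl => /eqP ->; rewrite conjCK.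
- by move=> y hrep; exact: riesz_choiceP.
Qed.

End BoundaryQuadruple.

Theorem theorem4p13 (R : realType) (H : hilbert R) (T : H -> H)
    (Hp Hm : hilbert R) (Gp : H * H -> Hp) (Gm : H * H -> Hm) :
  separable H -> infinite_dim H ->
  is_contraction T -> cnu T ->
  boundary_quadruple T Gp Gm ->
  let B := Weyl T Gp Gm in
  let Bs := fun (l : R[i]) => adjoint (B l) in
  (* l, m in D_+ *)
  (forall l m : R[i], `|l| < 1 -> `|m| < 1 -> forall y : Hm,
     Kpp T Gm l m y = (1 - l * m^*)^-1 *: (y - B l (Bs m y))) /\
  (* l, m in D_- *)
  (forall l m : R[i], `|l| < 1 -> `|m| < 1 -> forall y : Hp,
     Kmm T Gp l m y = (1 - l * m^*)^-1 *: (y - Bs l^* (B m^* y))) /\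
  (* l in D_+, m in D_-, l <> conj m *)
  (forall l m : R[i], `|l| < 1 -> `|m| < 1 -> l != m^* -> forall y : Hp,
     Kpm T Gp Gm l m y = (l - m^*)^-1 *: (B l y - B m^* y)) /\
  (* l in D_+, m = conj l in D_-: limit of the difference quotient,
     in operator norm *)
  (forall l : R[i], `|l| < 1 -> forall e : R[i], 0 < e ->
     exists d : R[i], 0 < d /\ forall n : R[i], `|n| < 1 -> n != l ->
       `|n - l| < d -> forall y : Hp,
       hnorm (Kpm T Gp Gm l l^* y - (l - n)^-1 *: (B l y - B n y))
         <= e * hnorm y) /\
  (* l in D_-, m in D_+, l <> conj m *)
  (forall l m : R[i], `|l| < 1 -> `|m| < 1 -> l != m^* -> forall y : Hm,
     Kmp T Gp Gm l m y = (l - m^*)^-1 *: (Bs l^* y - Bs m y)) /\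
  (* l in D_-, m = conj l in D_+: limit of the difference quotient,
     in operator norm *)
  (forall l : R[i], `|l| < 1 -> forall e : R[i], 0 < e ->
     exists d : R[i], 0 < d /\ forall n : R[i], `|n| < 1 -> n != l^* ->
       `|n - l^*| < d -> forall y : Hm,
       hnorm (Kmp T Gp Gm l l^* y - (l - n^*)^-1 *: (Bs l^* y - Bs n y))
         <= e * hnorm y).
Proof.
move=> _ _ _ _ hBQ B Bs.
split; first by move=> l m /normc_lt1 hl /normc_lt1 hm y; exact: Kpp_formula.
split; first by move=> l m /normc_lt1 hl /normc_lt1 hm y; exact: Kmm_formula.
split; first by move=> l m /normc_lt1 hl /normc_lt1 hm lm y; exact: Kpm_formula.
split.
  move=> l /normc_lt1 hl e e0; have [d [d0 hd]] := Kpm_conj_limit hBQ hl e0.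
  by exists d; split => // n _; exact: hd.
split; first by move=> l m /normc_lt1 hl /normc_lt1 hm lm y; exact: Kmp_formula.
move=> l /normc_lt1 hl e e0; have [d [d0 hd]] := Kmp_conj_limit hBQ hl e0.
by exists d; split => // n _; exact: hd.
Qed.
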